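(* Let $p\in[0,1]$ and let $\{G_n\}$ be a sequence of graphs with a converging giant (with respect to $\mu$ and $p$), $G_n$ having $n$ vertices, and let $v$ be a uniformly random vertex. If $\zeta(p)>0$ then $\lim_{k\to\infty}\limsup_{n\to\infty}\mathbb P(v\notin C_1,\ |C(v)|\ge k)=0$; if $\zeta(p)=0$ then $\lim_{k\to\infty}\limsup_{n\to\infty}\mathbb P(|C(v)|\ge k)=0$. Moreover, for two independent uniformly random vertices $u,v$, $\lim_{k\to\infty}\limsup_{n\to\infty}\mathbb P\big(|C(u)|\ge k,\ |C(v)|\ge k,\ C(u)\ne C(v)\big)=0$. Probabilities are over the graph, percolation and the choice of vertices.
   Context: $\mathcal G_*$: rooted connected locally finite graphs up to root-preserving isomorphism; $\{G_n\}$ converges in probability in the local weak sense to $\mu$ on $\mathcal G_*$ if $\frac1{|V(G_n)|}\sum_vf(G_n,v)\to\int f\,d\mu$ in probability for every bounded $f$ depending only on a bounded-radius ball around the root. $G(p)$ is bond percolation with retention probability $p$, $C(v)$ is the component of $v$ in $G_n(p)$, $C_1$ the largest component of $G_n(p)$, and $\zeta(p)=\int\mathbb P_{G(p)}(|C(o)|=\infty)\,d\mu$. A sequence $\{G_n\}$ of (possibly random) graphs converging in probability in the local weak sense to $\mu$ has a converging giant if $|C_1|/n\to\zeta(p)$ in probability. *)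

From HB Require Import structures.
From mathcomp Require Import all_boot all_order all_algebra.
From mathcomp Require Import all_classical all_reals all_analysis.
Set Implicit Arguments. Unset Strict Implicit. Unset Printing Implicit Defensive.
Import Order.TTheory GRing.Theory Num.Theory.
Import numFieldNormedType.Exports.
Local Open Scope classical_set_scope.
Local Open Scope ring_scope.

Definition fin_graph (n : nat) := {set 'I_n * 'I_n}.

Definition simple_graph n (G : fin_graph n) : bool :=
  [forall x, forall y, ((x, y) \in G) == ((y, x) \in G)] &&
  [forall x, (x, x) \notin G].

(* Bond percolation with retention probability p on a simple graph G:  *)
(* a configuration is the set w of retained edges, each undirected      *)
(* edge being represented by its pair (x,y) with x < y. The weight is   *)
Definition perc_weight (R : numDomainType) (p : R) n (G w : fin_graph n) : R :=
  if w \subset [set e in G | (e.1 < e.2)%N]%SET then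
    \prod_(e in G | (e.1 < e.2)%N) (if e \in w then p else 1 - p)
  else 0.

Definition open_rel n (w : fin_graph n) : rel 'I_n :=
  fun x y => ((x, y) \in w) || ((y, x) \in w).

Definition perc_cluster n (w : fin_graph n) (v : 'I_n) : {set 'I_n} :=
  [set y | connect (open_rel w) v y]%SET.

Definition max_cluster_size n (w : fin_graph n) : nat :=
  \max_(v : 'I_n) #|perc_cluster w v|.

(* membership in C_1, the largest component (ties broken by choosing   *)
(* a canonical vertex with [pick]).                                     *)
Definition in_giant n (w : fin_graph n) (v : 'I_n) : bool :=
  if [pick u | #|perc_cluster w u| == max_cluster_size w] is Some u
  then v \in perc_cluster w u else false.

Definition giant_size n (w : fin_graph n) : nat := #|[set v | in_giant w v]%SET|.

(* Probabilities on the finite side: a (possibly random) graph G_n on  *)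
(* n vertices with law P n, then percolation, then uniform vertices.   *)
Definition ProbGraph (R : numFieldType) (P : forall n, fin_graph n -> R) n
  (E : fin_graph n -> bool) : R :=
  \sum_(G : fin_graph n) P n G * (E G)%:R.

Definition Eperc (R : numFieldType) (P : forall n, fin_graph n -> R) (p : R) n
  (F : fin_graph n -> fin_graph n -> R) : R :=
  \sum_(G : fin_graph n) \sum_(w : fin_graph n) P n G * perc_weight p G w * F G w.

Definition ProbPerc (R : numFieldType) (P : forall n, fin_graph n -> R) (p : R) n
  (E : fin_graph n -> fin_graph n -> bool) : R :=
  Eperc P p (fun G w => (E G w)%:R).

Definition Prob1 (R : numFieldType) (P : forall n, fin_graph n -> R) (p : R) n
  (E : fin_graph n -> fin_graph n -> 'I_n -> bool) : R :=
  Eperc P p (fun G w => (\sum_(v : 'I_n) (E G w v)%:R) / n%:R).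

Definition Prob2 (R : numFieldType) (P : forall n, fin_graph n -> R) (p : R) n
  (E : fin_graph n -> fin_graph n -> 'I_n -> 'I_n -> bool) : R :=
  Eperc P p (fun G w =>
    (\sum_(u : 'I_n) \sum_(v : 'I_n) (E G w u v)%:R) / (n%:R ^+ 2)).

(* Rooted graphs: a graph on nat rooted at 0; the rooted graph proper  *)
(* is the component of 0.                                               *)
Definition rooted_graph := nat -> nat -> bool.

Definition valid_rgraph (a : rooted_graph) : Prop :=
  (forall x y, a x y = a y x) /\ (forall x, ~~ a x x) /\
  (forall x, exists N, forall y, a x y -> (y < N)%N).

Fixpoint within (a : rooted_graph) (r x : nat) : Prop :=
  match r with
  | 0 => x = 0%N
  | r'.+1 => within a r' x \/ exists y, within a r' y /\ a y x
  end.

Definition ball_iso (r : nat) (a b : rooted_graph) : Prop :=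
  exists phi : nat -> nat,
    [/\ phi 0%N = 0%N,
        forall x, within a r x -> within b r (phi x),
        forall x y, within a r x -> within a r y -> phi x = phi y -> x = y,
        forall y, within b r y -> exists2 x, within a r x & phi x = y
      & forall x y, within a r x -> within a r y -> a x y = b (phi x) (phi y)].

Definition local_fun (R : Type) (f : rooted_graph -> R) : Prop :=
  exists r, forall a b, ball_iso r a b -> f a = f b.

Definition bounded_rfun (R : numDomainType) (f : rooted_graph -> R) : Prop :=
  exists M : R, forall a, `|f a| <= M.

(* the finite graph G rooted at v, relabelled so that v becomes 0 *)
Definition decode n (v : 'I_n) (i : nat) : option 'I_n :=
  if i == 0%N then Some v else insub (if (i <= v)%N then i.-1 else i).

Definition rooted_at n (G : fin_graph n) (v : 'I_n) : rooted_graph :=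
  fun i j => match decode v i, decode v j with
             | Some x, Some y => (x, y) \in G
             | _, _ => false
             end.

(* Local weak convergence in probability of G_n (law P n) to mu, where *)
(* mu is the law of the random rooted graph X on (Omega, Pmu).          *)
Definition lwc_in_prob (R : realType) (P : forall n, fin_graph n -> R)
  (d : measure_display) (Omega : measurableType d) (Pmu : probability Omega R)
  (X : Omega -> rooted_graph) : Prop :=
  forall f : rooted_graph -> R, local_fun f -> bounded_rfun f ->
  forall eps : R, 0 < eps ->
  (fun n => ProbGraph P (fun G : fin_graph n =>
      `| (\sum_(v : 'I_n) f (rooted_at G v)) / n%:R
         - Rintegral Pmu setT (f \o X) | > eps)) @ \oo --> 0.

(* zeta(p) = \int P_{G(p)}(|C(o)| = oo) dmu.                            *)
(* P_{G(p)}(|C(o)| >= k) is obtained as the increasing limit of the     *)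
(* corresponding probability for the graph restricted to {0,...,N}, and *)
(* P(|C(o)| = oo) as the decreasing limit in k (continuity of the       *)
(* product measure).                                                    *)
Definition restr (a : rooted_graph) (N : nat) : fin_graph N.+1 :=
  [set e : 'I_N.+1 * 'I_N.+1 | a e.1 e.2]%SET.

Definition perc_ge (R : numDomainType) (p : R) (a : rooted_graph) (k N : nat) : R :=
  \sum_(w : fin_graph N.+1)
    perc_weight p (restr a N) w * (k <= #|perc_cluster w ord0|)%N%:R.

Definition perc_inf (R : realType) (p : R) (a : rooted_graph) : R :=
  limn (fun k => limn (fun N => (perc_ge p a k N : R))).

Definition zeta (R : realType) (p : R) (d : measure_display)
  (Omega : measurableType d) (Pmu : probability Omega R)
  (X : Omega -> rooted_graph) : R :=
  Rintegral Pmu setT (fun o => perc_inf p (X o)).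

Definition converging_giant (R : realType) (P : forall n, fin_graph n -> R) (p : R)
  (d : measure_display) (Omega : measurableType d) (Pmu : probability Omega R)
  (X : Omega -> rooted_graph) : Prop :=
  forall eps : R, 0 < eps ->
  (fun n => ProbPerc P p (fun (G w : fin_graph n) =>
      `| (giant_size w)%:R / n%:R - zeta p Pmu X | > eps)) @ \oo --> 0.

From Pilot Require Import Defs.
From HB Require Import structures.
From mathcomp Require Import all_boot all_order all_algebra.
From mathcomp Require Import all_classical all_reals all_analysis.
From mathcomp Require Import zify lra ring measurable_realfun.
Import Order.TTheory GRing.Theory Num.Theory.
Import numFieldNormedType.Exports.
Set Implicit Arguments. Unset Strict Implicit. Unset Printing Implicit Defensive.
Local Open Scope ring_scope.

(* The event [|C(v)| >= k] is decided by the ball of radius [k - 1] around [v], so local weak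
   convergence turns [P(|C(v)| >= k)] into [zeta_k = E_mu P(|C(o)| >= k)], and [zeta_k]
   decreases to [zeta(p)] by dominated convergence.  The giant [C_1] is a single cluster, so
   at most [k] of its vertices have a cluster of size [< k]; hence
   [P(v \notin C_1, |C(v)| >= k) <= P(|C(v)| >= k) - P(v \in C_1) + k/n], whose limit is
   [zeta_k - zeta(p)] by the converging giant.  Two vertices in distinct clusters are not
   both in [C_1], which bounds the two-vertex probability by twice the one-vertex one. *)

Section Clusters.
Variable n : nat.
Implicit Types (w H : fin_graph n) (x y : 'I_n) (S A : {set 'I_n}).

Lemma simple_graph_sym (G : fin_graph n) :
  simple_graph G -> forall x y, (x, y) \in G -> (y, x) \in G.
Proof. by case/andP=> /forallP G_sym _ x y; move: (G_sym x) => /forallP /(_ y) /eqP <-. Qed.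

Lemma open_relC w x y : open_rel w x y = open_rel w y x.
Proof. by rewrite /open_rel orbC. Qed.

Lemma perc_cluster_self w x : x \in perc_cluster w x.
Proof. by rewrite inE connect0. Qed.

Lemma perc_cluster_mono w1 w2 x :
  w1 \subset w2 -> perc_cluster w1 x \subset perc_cluster w2 x.
Proof.
move=> /fintype.subsetP s; apply/fintype.subsetP => y; rewrite !inE.
by apply: connect_sub => a b /orP[] /s h; apply: connect1; rewrite /open_rel h ?orbT.
Qed.

Lemma perc_cluster_eq w x y :
  y \in perc_cluster w x -> perc_cluster w y = perc_cluster w x.
Proof.
have w_sym := sym_connect_sym (open_relC w).
rewrite inE => cxy; apply/setP => z; rewrite !inE; apply/idP/idP; last first.
  by rewrite w_sym in cxy; apply: connect_trans.
exact: connect_trans.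
Qed.

Lemma perc_cluster_sub w S x :
  (forall e, e \in w -> (e.1 \in S) && (e.2 \in S)) -> x \in S ->
  perc_cluster w x \subset S.
Proof.
move=> wS xS; apply/fintype.subsetP => y; rewrite inE => cxy.
have cl : fingraph.closed (open_rel w) S.
  by move=> a b /orP[] /wS /andP[/= ha hb]; rewrite ha hb.
by rewrite -(closed_connect cl cxy).
Qed.

Lemma perc_cluster_exit w A x :
  x \in A -> ~~ (perc_cluster w x \subset A) ->
  exists z z', [/\ open_rel w z z', z \in A & z' \notin A].
Proof.
move=> xA; apply: contraNP => no_exit.
have cl : fingraph.closed (open_rel w) A.
  move=> a b ab; apply/idP/idP => [aA|bA]; apply/negPn/negP => h; apply: no_exit.
    by exists a, b.
  by exists b, a; rewrite open_relC.
apply/fintype.subsetP => y; rewrite inE => cxy.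
by rewrite -(closed_connect cl cxy).
Qed.

Definition induced_graph w S : fin_graph n := [set e in w | (e.1 \in S) && (e.2 \in S)].

Lemma in_induced_graph w S e :
  (e \in induced_graph w S) = [&& e \in w, e.1 \in S & e.2 \in S].
Proof. by rewrite inE. Qed.

Lemma induced_graph_sub w S : induced_graph w S \subset w.
Proof. by apply/fintype.subsetP => e; rewrite inE => /andP[]. Qed.

Lemma induced_graph_mono w S1 S2 :
  S1 \subset S2 -> induced_graph w S1 \subset induced_graph w S2.
Proof.
move=> /fintype.subsetP s; apply/fintype.subsetP => e; rewrite !inE.
by case/and3P => -> /s -> /s ->.
Qed.

Lemma perc_cluster_induced_graph_sub w S x :
  x \in S -> perc_cluster (induced_graph w S) x \subset S.
Proof. by apply: perc_cluster_sub => e; rewrite inE => /andP[]. Qed.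

Fixpoint graph_ball H x (j : nat) : {set 'I_n} :=
  if j is j'.+1 then graph_ball H x j' :|:
     [set y | [exists z in graph_ball H x j', open_rel H z y]]
  else [set x].

Lemma graph_ball_center H x j : x \in graph_ball H x j.
Proof. by elim: j => [|j IH] /=; rewrite ?inE ?IH. Qed.

(* The event [k <= #|C(x)|] is decided inside the ball of radius [k - 1]. *)
Lemma card_perc_cluster_ball H w x j : w \subset H ->
  (minn #|perc_cluster w x| j.+1 <= #|perc_cluster (induced_graph w (graph_ball H x j)) x|)%N.
Proof.
move=> /fintype.subsetP wH; elim: j => [|j IH].
  rewrite (leq_trans (geq_minr _ _)) // card_gt0; apply/set0Pn; exists x.
  exact: perc_cluster_self.
set S := graph_ball H x j; set S' := graph_ball H x j.+1.
set C := perc_cluster w x; set Cj := perc_cluster (induced_graph w S) x.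
set Cj' := perc_cluster (induced_graph w S') x.
have sSS' : S \subset S' by apply: finset.subsetUl.
have sub1 : Cj \subset Cj' by apply/perc_cluster_mono/induced_graph_mono.
have [hC|hC] := leqP #|C| #|Cj|.
  rewrite (leq_trans (geq_minl _ _)) // (leq_trans hC) // subset_leq_card //.
have Cj_gt_j : (j.+1 <= #|Cj|)%N by move: IH; rewrite -/S -/C -/Cj; lia.
have [z [z' [ezz' zCj z'Cj]]] :
    exists z z', [/\ open_rel w z z', z \in Cj & z' \notin Cj].
  apply: perc_cluster_exit; first exact: perc_cluster_self.
  by apply/negP => /subset_leq_card; rewrite leqNgt hC.
have zS : z \in S.
  exact: (fintype.subsetP (perc_cluster_induced_graph_sub w (graph_ball_center H x j))).
have z'S' : z' \in S'.
  rewrite /S' /= !inE; apply/orP; right; apply/exists_inP; exists z => //.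
  by move: ezz'; rewrite /open_rel => /orP[/wH|/wH] ->; rewrite ?orbT.
have z'Cj' : z' \in Cj'.
  move/fintype.subsetP: sub1 => /(_ z zCj); rewrite !inE => cz.
  apply: (connect_trans cz); apply: connect1.
  by move: ezz'; rewrite /open_rel !in_induced_graph /= (fintype.subsetP sSS' z zS) z'S' !andbT.
have : z' |: Cj \subset Cj' by rewrite finset.subUset sub1 andbT finset.sub1set.
move=> /subset_leq_card; rewrite cardsU1 z'Cj => h.
by rewrite (leq_trans (geq_minr _ _)) // (leq_trans _ h).
Qed.

End Clusters.

Section Counting.
Variables (n : nat) (w : fin_graph n).

Lemma in_giant_cluster_eq x y :
  in_giant w x -> in_giant w y -> perc_cluster w x = perc_cluster w y.
Proof.
rewrite /in_giant; case: pickP => [u0 _|_] // hx hy.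
by rewrite (perc_cluster_eq hx) (perc_cluster_eq hy).
Qed.

Lemma sum_mem_card (A : {set 'I_n}) : (\sum_v ((v \in A) : nat) = #|A|)%N.
Proof. by rewrite -sum1_card [RHS]big_mkcond; apply: eq_bigr => v _; case: (v \in A). Qed.

Lemma card_small_giant_le k :
  (\sum_v ((in_giant w v && ~~ (k <= #|perc_cluster w v|)%N) : nat) <= k)%N.
Proof.
have [[v0 /andP[g0 small0]]|none] :=
  pselect (exists v0, in_giant w v0 && ~~ (k <= #|perc_cluster w v0|)%N); last first.
  by rewrite big1 // => v _; case h: (in_giant w v && _) => //; case: none; exists v.
apply: (@leq_trans (\sum_v ((v \in perc_cluster w v0) : nat))).
  apply: leq_sum => v _; case/boolP: (in_giant w v && _) => //= /andP[gv _].
  by rewrite -(in_giant_cluster_eq gv g0) perc_cluster_self.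
by rewrite sum_mem_card; move: small0; rewrite -ltnNge => /ltnW.
Qed.

Lemma count_outside_giant_le k :
  (\sum_v ((~~ in_giant w v && (k <= #|perc_cluster w v|)%N) : nat)
   + \sum_v (in_giant w v : nat)
   <= \sum_v ((k <= #|perc_cluster w v|)%N : nat) + k)%N.
Proof.
rewrite -big_split /=.
rewrite (eq_bigr (fun v => ((k <= #|perc_cluster w v|)%N : nat)
   + ((in_giant w v && ~~ (k <= #|perc_cluster w v|)%N) : nat))%N); last first.
  by move=> v _; case: (in_giant w v); case: (k <= _)%N.
by rewrite big_split /= leq_add2l card_small_giant_le.
Qed.

Lemma count_distinct_clusters_le k :
  (\sum_u \sum_v ([&& (k <= #|perc_cluster w u|)%N, (k <= #|perc_cluster w v|)%N
              & perc_cluster w u != perc_cluster w v] : nat)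
   <= 2 * n * \sum_u ((~~ in_giant w u && (k <= #|perc_cluster w u|)%N) : nat))%N.
Proof.
set f := fun u : 'I_n => ((~~ in_giant w u && (k <= #|perc_cluster w u|)%N) : nat).
apply: (@leq_trans (\sum_u \sum_v (f u + f v))%N).
  apply: leq_sum => u _; apply: leq_sum => v _; rewrite /f.
  case: (boolP (in_giant w u)) => gu; case: (boolP (in_giant w v)) => gv /=;
    case: (k <= _)%N; case: (k <= _)%N => //=; try by case: (_ != _).
  by rewrite (in_giant_cluster_eq gu gv) eqxx.
rewrite (eq_bigr (fun u => n * f u + \sum_v f v)%N); last first.
  by move=> u _; rewrite big_split /= sum_nat_const card_ord.
by rewrite big_split /= sum_nat_const card_ord -big_distrr /= -mulnA mul2n -addnn.
Qed.

End Counting.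

Section SubsetSums.
Variables (R : comPzSemiRingType) (T : finType).
Implicit Types (A B : {set T}) (c : T -> bool -> R).

Lemma sum_subsets_prod A c :
  \sum_(w : {set T} | w \subset A) \prod_(e in A) c e (e \in w) =
  \prod_(e in A) (c e true + c e false).
Proof.
pose F e b := if e \in A then c e b else (if b then 0 else 1 : R).
have := @bigA_distr_bigA R 0 1 *%R +%R T bool F.
rewrite (eq_bigr (fun e => if e \in A then c e true + c e false else 1)); last first.
  by move=> e _; rewrite big_bool /F; case: (e \in A) => //=; rewrite add0r.
rewrite -big_mkcond /= => ->.
rewrite (reindex (fun w : {set T} => [ffun e => e \in w])) /=; last first.
  apply: onW_bij; exists (fun f : {ffun T -> bool} => [set e | f e]).
    by move=> w; apply/setP => e; rewrite inE ffunE.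
  by move=> f; apply/ffunP => e; rewrite ffunE inE.
rewrite [LHS]big_mkcond /=; apply: eq_bigr => w _; symmetry.
rewrite (bigID (mem A)) /=.
under eq_bigr => e eA do rewrite ffunE /F eA.
under [X in _ * X]eq_bigr => e eA do rewrite ffunE /F (negbTE eA).
case: ifP => wA.
  rewrite [X in _ * X]big1 ?mulr1 // => e eA.
  by case: ifP => // ew; move/fintype.subsetP: wA => /(_ e ew); rewrite (negbTE eA).
have /subsetPn [e ew eA] := negbT wA.
by rewrite [X in _ * X](bigD1 e) //= ew mul0r mulr0.
Qed.

Lemma sum_subsets_split B A (Y : {set T} -> R) : B \subset A ->
  \sum_(w : {set T} | w \subset A) Y w =
  \sum_(w1 : {set T} | w1 \subset B) \sum_(w2 : {set T} | w2 \subset A :\: B) Y (w1 :|: w2).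
Proof.
move=> /fintype.subsetP sBA; rewrite pair_big_dep /=.
rewrite [RHS](reindex_onto (fun w : {set T} => (w :&: B, w :&: (A :\: B)))
   (fun q => q.1 :|: q.2)) /=; last first.
  move=> [q1 q2] /= /andP[/fintype.subsetP s1 /fintype.subsetP s2].
  congr pair; apply/setP => e; rewrite !inE.
    case e1: (e \in q1); first by rewrite /= s1.
    by case e2: (e \in q2) => //=; move: (s2 e e2); rewrite !inE => /andP[/negbTE ->].
  case e2: (e \in q2); first by rewrite orbT /=; move: (s2 e e2); rewrite inE.
  by case e1: (e \in q1) => //=; rewrite s1 //= andbF.
have UA : B :|: A :\: B = A.
  by apply/setP => e; rewrite !inE; case: (boolP (e \in B)) => //= /sBA ->.
apply: eq_big => w.
  by rewrite !finset.subsetIr /= -finset.setIUr UA; apply/idP/eqP => /finset.setIidPl.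
by move=> wA; rewrite -finset.setIUr UA; move/finset.setIidPl: wA => ->.
Qed.

Lemma sum_subsets_marginal B A c (F : {set T} -> R) :
  B \subset A -> (forall e, e \in A :\: B -> c e true + c e false = 1) ->
  \sum_(w : {set T} | w \subset A) (\prod_(e in A) c e (e \in w)) * F (w :&: B) =
  \sum_(w : {set T} | w \subset B) (\prod_(e in B) c e (e \in w)) * F w.
Proof.
move=> sBA c1; rewrite (sum_subsets_split _ sBA); apply: eq_bigr => w1 /fintype.subsetP s1.
have split_prod (w2 : {set T}) : w2 \subset A :\: B ->
   (\prod_(e in A) c e (e \in w1 :|: w2)) * F ((w1 :|: w2) :&: B) =
   ((\prod_(e in B) c e (e \in w1)) * F w1) * \prod_(e in A :\: B) c e (e \in w2).
  move=> /fintype.subsetP s2.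
  have -> : (w1 :|: w2) :&: B = w1.
    apply/setP => e; rewrite !inE; case e1: (e \in w1); first by rewrite /= s1.
    by case e2: (e \in w2) => //=; move: (s2 e e2); rewrite !inE => /andP[/negbTE ->].
  rewrite (big_setID B) /= (finset.setIidPr sBA) mulrAC; congr (_ * _ * _).
    apply: eq_bigr => e eB; rewrite inE; case e2: (e \in w2); last by rewrite orbF.
    by move: (s2 e e2); rewrite !inE eB.
  apply: eq_bigr => e; rewrite !inE => /andP[eB _].
  by case e1: (e \in w1) => //=; move: (s1 e e1); rewrite (negbTE eB).
by rewrite (eq_bigr _ split_prod) -big_distrr /= sum_subsets_prod (eq_bigr _ c1) big1_eq mulr1.
Qed.

End SubsetSums.

Section Percolation.
Variables (R : numDomainType) (p : R).
Hypothesis p01 : 0 <= p <= 1.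

Definition perc_edges n (G : fin_graph n) : {set 'I_n * 'I_n} := [set e in G | (e.1 < e.2)%N].

Lemma mem_perc_edges n (G : fin_graph n) e : e \in perc_edges G = (e \in G) && (e.1 < e.2)%N.
Proof. by rewrite inE. Qed.

Lemma perc_edges_sub n (G : fin_graph n) : perc_edges G \subset G.
Proof. by apply/fintype.subsetP => e; rewrite inE => /andP[]. Qed.

Definition bond_weight (b : bool) : R := if b then p else 1 - p.

Lemma bond_weight_ge0 b : 0 <= bond_weight b.
Proof. by case/andP: p01 => p0 p1; case: b => //=; rewrite subr_ge0. Qed.

Lemma bond_weightTF : bond_weight true + bond_weight false = 1.
Proof. by rewrite /bond_weight addrC subrK. Qed.

Lemma perc_weightE n (G w : fin_graph n) : perc_weight p G w =
  if w \subset perc_edges G then \prod_(e in perc_edges G) bond_weight (e \in w) else 0.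
Proof.
rewrite /perc_weight /perc_edges; case: ifP => // _.
by apply: eq_bigl => e; rewrite inE.
Qed.

Lemma sum_perc_weightE n (G : fin_graph n) (F : fin_graph n -> R) :
  \sum_w perc_weight p G w * F w =
  \sum_(w : fin_graph n | w \subset perc_edges G)
    (\prod_(e in perc_edges G) bond_weight (e \in w)) * F w.
Proof.
rewrite [RHS]big_mkcond; apply: eq_bigr => w _; rewrite perc_weightE.
by case: ifP => _; rewrite ?mul0r.
Qed.

Lemma perc_weight_ge0 n (G w : fin_graph n) : 0 <= perc_weight p G w.
Proof.
rewrite perc_weightE; case: ifP => // _.
by apply: prodr_ge0 => e _; apply: bond_weight_ge0.
Qed.

Lemma sum_perc_weight n (G : fin_graph n) : \sum_w perc_weight p G w = 1.
Proof.
under eq_bigr do rewrite -[perc_weight _ _ _]mulr1.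
rewrite sum_perc_weightE; under eq_bigr do rewrite mulr1.
by rewrite (sum_subsets_prod _ (fun _ b => bond_weight b)) big1 // => e _; apply: bond_weightTF.
Qed.

Lemma sum_perc_weight_subgraph n (G1 G2 : fin_graph n) (F : fin_graph n -> R) :
  G1 \subset G2 ->
  \sum_w perc_weight p G2 w * F (w :&: G1) = \sum_w perc_weight p G1 w * F w.
Proof.
move=> /fintype.subsetP s12; rewrite !sum_perc_weightE.
have sG : perc_edges G1 \subset perc_edges G2.
  by apply/fintype.subsetP => e; rewrite !inE => /andP[/s12 -> ->].
rewrite -(sum_subsets_marginal (c := fun _ b => bond_weight b) F sG); last first.
  by move=> e _; apply: bond_weightTF.
apply: eq_bigr => w /fintype.subsetP wG; congr (_ * F _).
apply/setP => e; rewrite !inE; case ew: (e \in w) => //=.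
by move: (wG e ew); rewrite !inE => /andP[_ ->]; rewrite andbT.
Qed.

Definition prob_cluster_ge n (G : fin_graph n) (x : 'I_n) (k : nat) : R :=
  \sum_w perc_weight p G w * (k <= #|perc_cluster w x|)%N%:R.

Lemma prob_cluster_ge_ge0 n (G : fin_graph n) x k : 0 <= prob_cluster_ge G x k.
Proof. by apply: sumr_ge0 => w _; rewrite mulr_ge0 ?perc_weight_ge0. Qed.

Lemma prob_cluster_ge_le1 n (G : fin_graph n) x k : prob_cluster_ge G x k <= 1.
Proof.
rewrite -(sum_perc_weight G); apply: ler_sum => w _.
by rewrite -[X in _ <= X]mulr1 ler_wpM2l ?perc_weight_ge0 // lern1 leq_b1.
Qed.

Lemma prob_cluster_geS n (G : fin_graph n) x k :
  prob_cluster_ge G x k.+1 <= prob_cluster_ge G x k.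
Proof.
apply: ler_sum => w _; rewrite ler_wpM2l ?perc_weight_ge0 // ler_nat.
by case: (leqP k.+1 _) => //= h; rewrite lt0b ltnW.
Qed.

Lemma prob_cluster_ge_mono n (G1 G2 : fin_graph n) x k :
  G1 \subset G2 -> prob_cluster_ge G1 x k <= prob_cluster_ge G2 x k.
Proof.
move=> s; rewrite /prob_cluster_ge -(sum_perc_weight_subgraph _ s); apply: ler_sum => w _.
rewrite ler_wpM2l ?perc_weight_ge0 // ler_nat.
case h: (k <= _)%N => //=; rewrite lt0b (leq_trans h) //.
by apply/subset_leq_card/perc_cluster_mono/finset.subsetIl.
Qed.

Lemma prob_cluster_ge_induced n (H : fin_graph n) x k (S : {set 'I_n}) :
  graph_ball H x k.-1 \subset S ->
  prob_cluster_ge (induced_graph H S) x k = prob_cluster_ge H x k.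
Proof.
move=> BS; apply/eqP; rewrite eq_le prob_cluster_ge_mono ?induced_graph_sub //=.
rewrite /prob_cluster_ge -(sum_perc_weight_subgraph _ (induced_graph_sub H S)).
apply: ler_sum => w _.
have [wG|wG] := boolP (w \subset perc_edges H); last first.
  by rewrite perc_weightE (negbTE wG) !mul0r.
rewrite ler_wpM2l ?perc_weight_ge0 //.
have wH : w \subset H := fintype.subset_trans wG (perc_edges_sub H).
have -> : w :&: induced_graph H S = induced_graph w S.
  apply/setP => e; rewrite !inE; case ew: (e \in w) => //=.
  by rewrite (fintype.subsetP wH e ew).
rewrite ler_nat; case h: (k <= _)%N => //=; rewrite lt0b.
case: k h BS => [|k] h BS //=.
have := card_perc_cluster_ball x k wH; rewrite (minn_idPr h) => h2.
by rewrite (leq_trans h2) // subset_leq_card // perc_cluster_mono // induced_graph_mono.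
Qed.

End Percolation.

Section Relabelling.
Variables (n m : nat) (f : 'I_n -> 'I_m) (S : {set 'I_n}) (G : fin_graph n).
Hypothesis f_inj : {in S &, injective f}.
Hypothesis G_S : forall e, e \in G -> (e.1 \in S) && (e.2 \in S).
Hypothesis G_sym : forall a b, (a, b) \in G -> (b, a) \in G.

Definition graph_image : fin_graph m := [set (f e.1, f e.2) | e in G].

(* [perc_weight] represents an undirected edge by its pair with [e.1 < e.2], so the image
   of such a pair has to be reoriented. *)
Definition edge_image (e : 'I_n * 'I_n) : 'I_m * 'I_m :=
  if (f e.1 < f e.2)%N then (f e.1, f e.2) else (f e.2, f e.1).

Lemma edge_image_inj : {in perc_edges G &, injective edge_image}.
Proof.
move=> [a b] [a' b']; rewrite !mem_perc_edges /=.
move=> /andP[/G_S/andP[/= aS bS] ab] /andP[/G_S/andP[/= a'S b'S] ab'].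
rewrite /edge_image /=; case: ifP => _; case: ifP => _ [] /= h1 h2.
- by rewrite (f_inj aS a'S h1) (f_inj bS b'S h2).
- move: ab ab'; rewrite (f_inj aS b'S h1) (f_inj bS a'S h2) => ab ab'.
  by move: (ltn_trans ab ab'); rewrite ltnn.
- move: ab ab'; rewrite (f_inj bS a'S h1) (f_inj aS b'S h2) => ab ab'.
  by move: (ltn_trans ab ab'); rewrite ltnn.
- by rewrite (f_inj aS a'S h2) (f_inj bS b'S h1).
Qed.

Lemma edge_image_perc_edges : edge_image @: perc_edges G = perc_edges graph_image.
Proof.
apply/setP => e'; apply/imsetP/idP.
  move=> [[a b]]; rewrite mem_perc_edges /= => /andP[abG ab] ->.
  have /andP[aS bS] := G_S abG.
  have fab : f a != f b.
    by apply: contraTneq ab => /f_inj -> //; rewrite ltnn.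
  rewrite /edge_image /= mem_perc_edges; case: ifP => h /=.
    by rewrite h andbT; apply/imsetP; exists (a, b).
  rewrite andbC; move: fab; rewrite neq_ltn h /= => -> /=.
  by apply/imsetP; exists (b, a) => //; apply: G_sym.
rewrite mem_perc_edges => /andP[/imsetP[[a b] abG ->]] /= fab.
have : a != b by apply: contraTneq fab => ->; rewrite ltnn.
rewrite neq_ltn => /orP[ab|ba].
  by exists (a, b); rewrite ?mem_perc_edges ?abG //= /edge_image /= fab.
exists (b, a); first by rewrite mem_perc_edges G_sym.
by rewrite /edge_image /= ltnNge (ltnW fab).
Qed.

Lemma mem_edge_image (w : fin_graph n) e : w \subset perc_edges G -> e \in perc_edges G ->
  (edge_image e \in edge_image @: w) = (e \in w).
Proof.
move=> /fintype.subsetP wG eG; apply/imsetP/idP; last by move=> ew; exists e.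
by move=> [e' e'w h]; rewrite (edge_image_inj eG (wG _ e'w) h).
Qed.

Lemma open_rel_mem (w : fin_graph n) a b :
  w \subset G -> open_rel w a b -> (a \in S) && (b \in S).
Proof.
move=> /fintype.subsetP wG /orP[/wG/G_S|/wG/G_S] //=.
by rewrite andbC.
Qed.

Lemma perc_cluster_sub_dom (w : fin_graph n) x :
  w \subset G -> x \in S -> perc_cluster w x \subset S.
Proof. by move=> /fintype.subsetP wG; apply: perc_cluster_sub => e /wG /G_S. Qed.

Lemma open_rel_edge_imageP (w : fin_graph n) a b : open_rel (edge_image @: w) a b ->
  exists u v, [/\ open_rel w u v, a = f u & b = f v].
Proof.
move=> /orP[] /imsetP[[u v] uvw]; rewrite /edge_image /=; case: ifP => _ [-> ->].
- by exists u, v; rewrite /open_rel uvw.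
- by exists v, u; rewrite /open_rel uvw orbT.
- by exists v, u; rewrite /open_rel uvw orbT.
- by exists u, v; rewrite /open_rel uvw.
Qed.

Lemma open_rel_edge_image (w : fin_graph n) u v :
  open_rel w u v -> open_rel (edge_image @: w) (f u) (f v).
Proof.
move=> /orP[] uvw; have := imset_f edge_image uvw;
  by rewrite /edge_image /=; case: ifP => _ h; rewrite /open_rel h ?orbT.
Qed.

Lemma perc_cluster_edge_image (w : fin_graph n) x : w \subset G -> x \in S ->
  perc_cluster (edge_image @: w) (f x) = f @: perc_cluster w x.
Proof.
move=> wG xS; have CS := fintype.subsetP (perc_cluster_sub_dom wG xS).
apply/setP => y; apply/idP/idP.
  rewrite inE => c.
  have cl : fingraph.closed (open_rel (edge_image @: w)) (f @: perc_cluster w x).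
    move=> a b /open_rel_edge_imageP [u [v [uv -> ->]]].
    have /andP[uS vS] := open_rel_mem wG uv.
    apply/imsetP/imsetP => -[z zC fz].
      have uz := f_inj uS (CS _ zC) fz.
      exists v => //; rewrite inE; rewrite inE -uz in zC.
      exact: (connect_trans zC (connect1 uv)).
    have vz := f_inj vS (CS _ zC) fz.
    exists u => //; rewrite inE; rewrite inE -vz in zC.
    by rewrite open_relC in uv; apply: (connect_trans zC (connect1 uv)).
  by rewrite -(closed_connect cl c); apply/imset_f/perc_cluster_self.
move=> /imsetP[z]; rewrite inE => c ->.
have cl : fingraph.closed (open_rel w)
    [set u | connect (open_rel (edge_image @: w)) (f x) (f u)].
  move=> a b ab; rewrite !inE; apply/idP/idP => h.
    exact: (connect_trans h (connect1 (open_rel_edge_image ab))).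
  rewrite open_relC in ab.
  exact: (connect_trans h (connect1 (open_rel_edge_image ab))).
by have := closed_connect cl c; rewrite !inE connect0 => <-.
Qed.

Variables (R : numDomainType) (p : R).

Lemma sum_perc_weight_image (F : fin_graph m -> R) :
  \sum_w' perc_weight p graph_image w' * F w' =
  \sum_w perc_weight p G w * F (edge_image @: w).
Proof.
rewrite !sum_perc_weightE.
rewrite (reindex_onto (fun w : fin_graph n => edge_image @: w)
   (fun w' : fin_graph m => perc_edges G :&: edge_image @^-1: w')) /=; last first.
  move=> w' /fintype.subsetP w'G; apply/setP => e'; apply/imsetP/idP.
    by move=> [e]; rewrite !inE => /andP[_ h] ->.
  move=> e'w'; have := w'G e' e'w'.
  rewrite -edge_image_perc_edges => /imsetP[e eG ee'].
  by exists e => //; rewrite finset.in_setI eG /= !inE -ee' e'w'.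
apply: eq_big => w.
  apply/andP/idP.
    by move=> [_ /eqP <-]; apply: finset.subsetIl.
  move=> wG; split; first by rewrite -edge_image_perc_edges; apply: imsetS.
  apply/eqP/setP => e; rewrite finset.in_setI; case eG: (e \in perc_edges G) => /=.
    by rewrite inE mem_edge_image.
  by apply/esym/negbTE; apply: contraFN eG; apply: (fintype.subsetP wG).
move=> /andP[_ /eqP wE]; have wG : w \subset perc_edges G by rewrite -wE finset.subsetIl.
congr (_ * _).
rewrite -edge_image_perc_edges big_imset /=; last exact: edge_image_inj.
by apply: eq_bigr => e eG; rewrite mem_edge_image.
Qed.

Lemma prob_cluster_ge_image x k : x \in S ->
  prob_cluster_ge p graph_image (f x) k = prob_cluster_ge p G x k.
Proof.
move=> xS; rewrite /prob_cluster_ge sum_perc_weight_image; apply: eq_bigr => w _.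
have [wG|wG] := boolP (w \subset perc_edges G); last first.
  by rewrite perc_weightE (negbTE wG) !mul0r.
have wG' : w \subset G := fintype.subset_trans wG (perc_edges_sub G).
rewrite perc_cluster_edge_image // card_in_imset //.
have CS := fintype.subsetP (perc_cluster_sub_dom wG' xS).
by move=> a b /CS aS /CS bS; apply: f_inj.
Qed.

End Relabelling.

Local Notation within := Defs.within.

Section RootedGraphs.
Implicit Types (a b : rooted_graph) (r j x : nat).

Lemma within0 a r : within a r 0.
Proof. by elim: r => [|r IH] //=; left. Qed.

Lemma within_le a j r x : (j <= r)%N -> within a j x -> within a r x.
Proof.
elim: r => [|r IH]; first by rewrite leqn0 => /eqP ->.
rewrite leq_eqVlt => /orP[/eqP -> //|]; rewrite ltnS => jr h /=; left; exact: IH.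
Qed.

Lemma within_subrel a b r x : subrel a b -> within a r x -> within b r x.
Proof.
move=> ab; elim: r x => [|r IH] x //= [h|[y [hy ayx]]]; first by left; apply: IH.
by right; exists y; split; [apply: IH|apply: ab].
Qed.

Definition sym_part a : rooted_graph := fun i j => a i j && a j i.

Lemma sym_part_sym a : symmetric (sym_part a).
Proof. by move=> i j; rewrite /sym_part andbC. Qed.

Lemma sym_part_id a : symmetric a -> sym_part a = a.
Proof. by move=> sa; apply/funext => i; apply/funext => j; rewrite /sym_part (sa j i) andbb. Qed.

Lemma within_sym_part a r x : within (sym_part a) r x -> within a r x.
Proof. by apply: within_subrel => i j /andP[]. Qed.

Lemma ball_iso_sym r a b : ball_iso r a b -> ball_iso r b a.
Proof.
move=> [phi [phi0 phi_in phi_inj phi_surj phi_adj]].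
pose psi y := if pselect (within b r y) is left h then sval (cid2 (phi_surj y h)) else y.
have psiP y : within b r y -> within a r (psi y) /\ phi (psi y) = y.
  by move=> h; rewrite /psi; case: pselect => [h'|//]; case: cid2.
exists psi; split.
- have [w0 e0] := psiP 0%N (within0 b r).
  by apply: phi_inj => //; [exact: within0|rewrite e0 phi0].
- by move=> y /psiP [].
- by move=> x y hx hy e; rewrite -(psiP x hx).2 -(psiP y hy).2 e.
- move=> x hx; exists (phi x); first exact: phi_in.
  by have [h1 h2] := psiP _ (phi_in x hx); apply: phi_inj.
- move=> x y hx hy; have [hx1 hx2] := psiP x hx; have [hy1 hy2] := psiP y hy.
  by rewrite phi_adj // hx2 hy2.
Qed.

Lemma ball_iso_sym_part r a b : ball_iso r a b -> ball_iso r (sym_part a) (sym_part b).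
Proof.
move=> [phi [phi0 phi_in phi_inj phi_surj phi_adj]].
have fwd j : (j <= r)%N -> forall x, within (sym_part a) j x -> within (sym_part b) j (phi x).
  elim: j => [|j IH] jr x H; first by move: H => /= ->.
  case: H => [h|[y [hy say]]]; first by left; apply: IH => //; apply: ltnW.
  have xa : within a r x by apply: (within_le jr); apply: within_sym_part; right; exists y.
  have ya : within a r y by apply: (within_le (ltnW jr)); apply: within_sym_part.
  right; exists (phi y); split; first by apply: IH => //; apply: ltnW.
  by move: say; rewrite /sym_part -!phi_adj.
have bwd j : (j <= r)%N -> forall y, within (sym_part b) j y ->
    exists2 x, within (sym_part a) j x & phi x = y.
  elim: j => [|j IH] jr y H; first by move: H => /= ->; exists 0%N.
  case: H => [h|[y' [hy' sby]]].
    by have [x hx ex] := IH (ltnW jr) y h; exists x => //; left.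
  have yb : within b r y by apply: (within_le jr); apply: within_sym_part; right; exists y'.
  have [x' hx' ex'] := IH (ltnW jr) y' hy'.
  have [x hx ex] := phi_surj y yb.
  have x'a : within a r x' by apply: (within_le (ltnW jr)); apply: within_sym_part.
  exists x => //; right; exists x'; split => //.
  by rewrite /sym_part !phi_adj // ex ex'.
exists phi; split => //.
- exact: fwd.
- by move=> x y /within_sym_part hx /within_sym_part hy; apply: phi_inj.
- exact: bwd.
- by move=> x y /within_sym_part hx /within_sym_part hy; rewrite /sym_part !phi_adj.
Qed.

Lemma restr_sym a N :
  symmetric a -> forall x y : 'I_N.+1, (x, y) \in restr a N -> (y, x) \in restr a N.
Proof. by move=> sa x y; rewrite !inE /= sa. Qed.

Lemma graph_ball_restr_within a N j : symmetric a ->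
  graph_ball (restr a N) ord0 j \subset [set i : 'I_N.+1 | `[< within a j i >]].
Proof.
move=> sa; elim: j => [|j IH].
  apply/fintype.subsetP => i; rewrite finset.in_set /= inE => /eqP ->.
  by apply/asboolP.
apply/fintype.subsetP => i /=; rewrite finset.in_setU => /orP[h|].
  move/fintype.subsetP: IH => /(_ i h); rewrite !finset.in_set => /asboolP wi.
  by apply/asboolP; left.
rewrite inE => /exists_inP[z zb]; rewrite /open_rel !inE /= => h.
move/fintype.subsetP: IH => /(_ z zb); rewrite finset.in_set => /asboolP wz.
by right; exists z; split => //; case/orP: h; rewrite // sa.
Qed.

End RootedGraphs.

Section RootedAt.
Variables (n : nat) (G : fin_graph n) (v : 'I_n).
Hypothesis G_sym : forall x y, (x, y) \in G -> (y, x) \in G.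

(* The inverse of [decode v]: [v] gets label 0 and the vertices below [v] are shifted up by one. *)
Definition root_label (x : nat) : nat :=
  if x == v then 0 else if (x < v)%N then x.+1 else x.

Lemma root_label_lt (x : 'I_n) : (root_label x < n.+1)%N.
Proof.
rewrite /root_label; case: eqP => _ //.
by case: (ltnP x v) => h; move: (ltn_ord x) (ltn_ord v) h; lia.
Qed.

Lemma decode_root_label (x : 'I_n) : Defs.decode v (root_label x) = Some x.
Proof.
rewrite /Defs.decode /root_label; have [xv|xv] := eqVneq (x : nat) (v : nat).
  by congr Some; apply: val_inj.
case: (ltnP x v) => h /=; first by rewrite h /= valK.
have -> : ((x : nat) == 0%N) = false by move: xv h; lia.
have -> : (x <= v)%N = false by move: xv h; lia.
by rewrite valK.
Qed.

Lemma decode_Some i (x : 'I_n) : Defs.decode v i = Some x -> i = root_label x.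
Proof.
rewrite /Defs.decode /root_label; case: eqP => [-> [<-]|i0]; first by rewrite eqxx.
case: insubP => // y _ yE [yx]; rewrite -yx yE.
case: (leqP i v) => h.
  have -> : (i.-1 == v) = false by move: i0 h; lia.
  have -> : (i.-1 < v)%N by move: i0 h; lia.
  by move: i0; lia.
have -> : (i == v) = false by move: h; lia.
by rewrite ltnNge (ltnW h).
Qed.

Variable N : nat.
Hypothesis nN : (n <= N)%N.

Definition root_relabel (x : 'I_n) : 'I_N.+1 := inord (root_label x).

Lemma root_relabelE x : (root_relabel x : nat) = root_label x.
Proof. by rewrite /root_relabel inordK // (leq_trans (root_label_lt x)). Qed.

Lemma restr_rooted_at : restr (sym_part (rooted_at G v)) N = graph_image root_relabel G.
Proof.
apply/setP => [[i j]]; rewrite inE /= /sym_part /rooted_at.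
apply/idP/idP.
  case ei: (Defs.decode v i) => [x|] //; case ej: (Defs.decode v j) => [y|] // /andP[xyG _].
  apply/imsetP; exists (x, y) => //=.
  by congr pair; apply: val_inj; rewrite /= root_relabelE; apply: decode_Some.
move=> /imsetP[[x y] xyG [-> ->]] /=.
by rewrite !root_relabelE !decode_root_label xyG G_sym.
Qed.

Variables (R : numDomainType) (p : R).

Lemma prob_cluster_ge_rooted_at k :
  prob_cluster_ge p (restr (sym_part (rooted_at G v)) N) ord0 k = prob_cluster_ge p G v k.
Proof.
have f_inj : {in [set: 'I_n] &, injective root_relabel}.
  move=> x y _ _ /(congr1 val); rewrite /= !root_relabelE => /(congr1 (Defs.decode v)).
  by rewrite !decode_root_label => -[].
have G_S e : e \in G -> (e.1 \in [set: 'I_n]) && (e.2 \in [set: 'I_n]).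
  by rewrite !finset.in_setT.
rewrite restr_rooted_at -(prob_cluster_ge_image f_inj G_S G_sym p k (finset.in_setT v)).
by congr prob_cluster_ge; apply: val_inj; rewrite /= root_relabelE /root_label eqxx.
Qed.

End RootedAt.

Section RootedPercolation.
Variables (R : realType) (p : R).
Hypothesis p01 : 0 <= p <= 1.
Implicit Types (a b : rooted_graph).

Lemma perc_geE a k N : perc_ge p a k N = prob_cluster_ge p (restr a N) ord0 k.
Proof. by []. Qed.

Lemma perc_ge_nondecreasing a k : symmetric a ->
  {homo perc_ge p a k : N M / (N <= M)%N >-> N <= M}.
Proof.
move=> sa; apply: homo_leq; [exact: lexx | by move=> ? ? ?; apply: le_trans | move=> N].
pose f := widen_ord (leqnSn N.+1).
have f_inj : {in [set: 'I_N.+1] &, injective f}.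
  by move=> x y _ _ /(congr1 val) /= /val_inj.
have G_S e : e \in restr a N -> (e.1 \in [set: 'I_N.+1]) && (e.2 \in [set: 'I_N.+1]).
  by rewrite !finset.in_setT.
rewrite !perc_geE.
rewrite -(prob_cluster_ge_image f_inj G_S (restr_sym sa) p k (finset.in_setT ord0)).
have -> : f ord0 = ord0 by apply: val_inj.
apply: prob_cluster_ge_mono => //.
by apply/fintype.subsetP => e /imsetP[[x y]]; rewrite inE /= => axy ->; rewrite inE.
Qed.

Lemma is_cvg_perc_ge a k : symmetric a -> cvgn (perc_ge p a k).
Proof.
move=> sa; apply: nondecreasing_is_cvgn; first exact: perc_ge_nondecreasing.
by exists 1 => _ [N _ <-]; rewrite perc_geE prob_cluster_ge_le1.
Qed.

Lemma perc_ge_le_lim a k N : symmetric a -> perc_ge p a k N <= limn (perc_ge p a k).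
Proof.
move=> sa.
by apply: nondecreasing_cvgn_le; [exact: perc_ge_nondecreasing|exact: is_cvg_perc_ge].
Qed.

(* Truncated to the ball of radius [k - 1], which is all that [|C(o)| >= k] sees, [a] embeds
   into a finite truncation of [b]. *)
Lemma lim_perc_ge_ball_iso k a b : symmetric a -> symmetric b -> ball_iso k a b ->
  limn (perc_ge p a k) <= limn (perc_ge p b k).
Proof.
move=> sa sb [phi [phi0 phi_in phi_inj phi_surj phi_adj]].
apply: limr_le; first exact: is_cvg_perc_ge.
apply: nearW => N.
pose S := [set i : 'I_N.+1 | `[< within a k.-1 i >]].
have S_within i : i \in S -> within a k i.
  by rewrite inE => /asboolP; apply: within_le; apply: leq_pred.
rewrite perc_geE -(prob_cluster_ge_induced p01 (S := S)); last exact: graph_ball_restr_within.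
pose M := (\max_(i : 'I_N.+1) phi i)%N.
pose f (i : 'I_N.+1) : 'I_M.+1 := inord (phi i).
have fE i : (f i : nat) = phi i.
  by rewrite /f inordK // ltnS (leq_bigmax (F := fun i : 'I_N.+1 => phi i)).
have f_inj : {in S &, injective f}.
  move=> x y xS yS /(congr1 val); rewrite /= !fE => h.
  by apply: val_inj; apply: phi_inj => //; apply: S_within.
have G_S e : e \in induced_graph (restr a N) S -> (e.1 \in S) && (e.2 \in S).
  by rewrite in_induced_graph => /and3P[_ -> ->].
have G_sym x y :
    (x, y) \in induced_graph (restr a N) S -> (y, x) \in induced_graph (restr a N) S.
  by rewrite !in_induced_graph /= => /and3P[/restr_sym -> //= -> ->].
have oS : ord0 \in S by rewrite inE; apply/asboolP; apply: within0.
rewrite -(prob_cluster_ge_image f_inj G_S G_sym p k oS).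
have -> : f ord0 = ord0 by apply: val_inj; rewrite /= fE phi0.
apply: (le_trans _ (perc_ge_le_lim k M sb)); rewrite perc_geE.
apply: prob_cluster_ge_mono => //.
apply/fintype.subsetP => e /imsetP[[x y]].
rewrite in_induced_graph /= => /and3P[axy xS yS] ->.
rewrite inE /= !fE -phi_adj; [by move: axy; rewrite inE|exact: S_within|exact: S_within].
Qed.

(* Symmetrising [a] first makes this a
   bounded local function of every rooted graph, as [lwc_in_prob] requires, without changing
   it on symmetric ones. *)
Definition root_prob_ge (k : nat) (a : rooted_graph) : R := limn (perc_ge p (sym_part a) k).

Lemma root_prob_ge_ge0 k a : 0 <= root_prob_ge k a.
Proof.
apply: (le_trans _ (perc_ge_le_lim _ 0 (sym_part_sym a))).
by rewrite perc_geE prob_cluster_ge_ge0.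
Qed.

Lemma root_prob_ge_le1 k a : root_prob_ge k a <= 1.
Proof.
apply: limr_le; first exact/is_cvg_perc_ge/sym_part_sym.
by apply: nearW => N; rewrite perc_geE prob_cluster_ge_le1.
Qed.

Lemma local_root_prob_ge k : local_fun (root_prob_ge k).
Proof.
exists k => a b iso; apply/le_anti/andP; split;
  apply: lim_perc_ge_ball_iso; try exact: sym_part_sym.
  exact: ball_iso_sym_part.
exact/ball_iso_sym_part/ball_iso_sym.
Qed.

Local Open Scope classical_set_scope.

Lemma root_prob_ge_cvg a : symmetric a -> (fun k => root_prob_ge k a) @ \oo --> perc_inf p a.
Proof.
move=> sa; have E k : root_prob_ge k a = limn (perc_ge p a k).
  by rewrite /root_prob_ge sym_part_id.
have nonincr : {homo (fun k => root_prob_ge k a) : k l / (k <= l)%N >-> l <= k}.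
  apply: homo_leq; [exact: lexx | by move=> ? ? ? h1 h2; apply: le_trans h2 h1 | move=> k].
  rewrite !E; apply: ler_lim; try exact: is_cvg_perc_ge.
  by apply: nearW => N; rewrite !perc_geE prob_cluster_geS.
have cv : cvgn (fun k => root_prob_ge k a).
  apply: nonincreasing_is_cvgn => //.
  by exists 0 => _ [k _ <-]; apply: root_prob_ge_ge0.
suff -> : perc_inf p a = limn (fun k => root_prob_ge k a) by [].
by rewrite /perc_inf; congr (limn _); apply/funext => k; rewrite E.
Qed.

Lemma root_prob_ge_rooted_at n (G : fin_graph n) v k :
  (forall x y, (x, y) \in G -> (y, x) \in G) ->
  root_prob_ge k (rooted_at G v) = prob_cluster_ge p G v k.
Proof.
move=> G_sym; apply: cvg_lim => //; apply: cvg_near_cst; exists n => // N /= nN.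
by rewrite perc_geE prob_cluster_ge_rooted_at.
Qed.

End RootedPercolation.

Section Analysis.
Variable R : realType.
Local Open Scope classical_set_scope.

(* The estimate [|E Y - c| <= eps/2 + (1 + |c|) P(|Y - c| > eps/2)], valid for [0 <= Y <= 1]. *)
Lemma cvg_expectation_bounded (I : nat -> finType) (pi Y : forall n, I n -> R) (c : R) :
  (forall n i, 0 <= pi n i) -> (forall n, \sum_i pi n i = 1) ->
  (forall n i, 0 <= Y n i <= 1) ->
  (forall eps, 0 < eps ->
     (fun n => \sum_i pi n i * (`|Y n i - c| > eps)%R%:R) @ \oo --> 0) ->
  (fun n => \sum_i pi n i * Y n i) @ \oo --> c.
Proof.
move=> pi0 pi1 Y01 hq; apply/cvgrPdist_le => e e0.
pose B := 1 + `|c|.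
have B0 : 0 < B by rewrite /B; have := normr_ge0 c; lra.
have e2 : 0 < e / 2 by lra.
move: (hq _ e2) => /cvgrPdist_le /(_ _ (divr_gt0 e2 B0)); apply: filterS => n hn.
have q_ge0 : 0 <= \sum_i pi n i * (`|Y n i - c| > e / 2)%R%:R.
  by apply: sumr_ge0 => i _; apply: mulr_ge0.
have hq' : B * \sum_i pi n i * (`|Y n i - c| > e / 2)%R%:R <= e / 2.
  move: hn; rewrite sub0r normrN ger0_norm // => hn.
  by rewrite -(ler_pM2l B0) in hn; move: hn; rewrite mulrCA divff ?mulr1 // gt_eqF.
have -> : c - \sum_i pi n i * Y n i = \sum_i pi n i * (c - Y n i).
  rewrite -[c in LHS]mul1r -(pi1 n) big_distrl /= -sumrB.
  by apply: eq_bigr => i _; rewrite mulrBr mulrC.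
apply: (le_trans (ler_norm_sum _ _ _)).
apply: (@le_trans _ _ (\sum_i pi n i * (e / 2 + B * (`|Y n i - c| > e / 2)%R%:R))).
  apply: ler_sum => i _; rewrite normrM ger0_norm //; apply: ler_wpM2l => //.
  have := Y01 n i; case: ltrP => h /= /andP[y0 y1].
    have : `|c - Y n i| <= `|c| + `|Y n i| by rewrite -(normrN (Y n i)) ler_normD.
    rewrite (ger0_norm y0) /B; lra.
  by rewrite distrC; lra.
rewrite (eq_bigr (fun i => e / 2 * pi n i + B * (pi n i * (`|Y n i - c| > e / 2)%R%:R)));
  last by move=> i _; ring.
by rewrite big_split /= -big_distrr -big_distrr /= pi1 mulr1; lra.
Qed.

Lemma limn_sup_bounds (s a : R^nat) (A : R) :
  (forall n, 0 <= s n <= a n) -> a @ \oo --> A -> 0 <= limn_sup s <= A.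
Proof.
move=> sa aA.
have s0 n : 0 <= s n by case/andP: (sa n).
have [M hM] : has_ubound (range a).
  by apply: bounded_fun_has_ubound; apply: cvg_seq_bounded; apply/cvg_ex; exists A.
have ubs : has_ubound (range s).
  by exists M => _ [n _ <-]; apply: (le_trans (andP (sa n)).2); apply: hM; exists n.
have cv : cvgn (sups s).
  apply: nonincreasing_is_cvgn; first exact: nonincreasing_sups.
  by exists 0 => _ [n _ <-]; apply: (le_trans (s0 n)); apply: ub_le_sup;
    [exact: has_ubound_sdrop | exists n => /=].
apply/andP; split.
  apply: limr_ge => //; apply: nearW => n; apply: (le_trans (s0 n)).
  by apply: ub_le_sup; [exact: has_ubound_sdrop|exists n => /=].
apply/ler_addgt0Pr => e e0; apply: limr_le => //.
move/cvgrPdist_le: aA => /(_ e e0) [K _ hK].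
exists K => // n /= Kn.
apply: ge_sup; first by exists (s n); exists n => /=.
move=> _ [m /= nm <-]; apply: (le_trans (andP (sa m)).2).
have := hK m (leq_trans Kn nm); rewrite /= => h.
have : a m - A <= `|A - a m| by rewrite distrC ler_norm.
lra.
Qed.

Lemma limn_sup_cvg0 (s a : nat -> R^nat) (A : R^nat) :
  (forall k n, 0 <= s k n <= a k n) -> (forall k, a k @ \oo --> A k) -> A @ \oo --> 0 ->
  (fun k => limn_sup (s k)) @ \oo --> 0.
Proof.
move=> sa aA A0; apply: (@squeeze_cvgr _ _ _ _ (fun=> 0) A); [|exact: cvg_cst|exact: A0].
by apply: nearW => k; apply: limn_sup_bounds (sa k) (aA k).
Qed.

Lemma Rintegral_cvg_bounded (d : measure_display) (Omega : measurableType d)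
  (Pmu : probability Omega R) (g : nat -> Omega -> R) (g_lim : Omega -> R) :
  (forall k, measurable_fun setT (g k)) -> (forall o, g ^~ o @ \oo --> g_lim o) ->
  (forall k o, `|g k o| <= 1) ->
  (fun k => Rintegral Pmu setT (g k)) @ \oo --> Rintegral Pmu setT g_lim.
Proof.
move=> mg cg bg.
have mg_lim : measurable_fun setT g_lim.
  by apply: (measurable_fun_cvg mg) => o _; apply: cg.
have cE o : (fun k => (g k o)%:E) @ \oo --> (g_lim o)%:E.
  by apply: cvg_EFin; [exact: nearW|exact: cg].
have [ig_lim _ hc] := @dominated_convergence _ _ _ Pmu setT measurableT
  (fun k o => (g k o)%:E) (fun o => (g_lim o)%:E) (EFin \o cst 1)
  (fun k => proj2 (measurable_EFinP _ _) (mg k))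
  (proj2 (measurable_EFinP _ _) mg_lim)
  (aeW _ (fun o _ => cE o))
  (finite_measure_integrable_cst _ 1 measurableT)
  (aeW _ (fun o k _ => bg k o)).
move: hc; rewrite -[X in _ --> X]fineK ?(integrable_fin_num measurableT ig_lim) // => hc.
exact: (fine_cvg hc).
Qed.

Lemma mean_in01 n (f : 'I_n -> R) :
  (forall v, 0 <= f v <= 1) -> 0 <= (\sum_v f v) / n%:R <= 1.
Proof.
case: n f => [|n] f f01; first by rewrite big_ord0 mul0r lexx ler01.
apply/andP; split.
  by apply: divr_ge0 => //; apply: sumr_ge0 => v _; case/andP: (f01 v).
rewrite ler_pdivrMr ?ltr0Sn // mul1r.
apply: (@le_trans _ _ (\sum_(v < n.+1) (1 : R))); last by rewrite sumr_const card_ord.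
by apply: ler_sum => v _; case/andP: (f01 v).
Qed.

Lemma natr_ratio_in01 n m : (m <= n)%N -> 0 <= (m%:R : R) / n%:R <= 1.
Proof.
case: n => [|n] mn; first by rewrite invr0 mulr0 lexx ler01.
by rewrite divr_ge0 //= ler_pdivrMr ?ltr0Sn // mul1r ler_nat.
Qed.

Lemma natr_div_cvg0 (k : nat) : (fun n => (k%:R : R) / n%:R) @ \oo --> 0.
Proof.
rewrite -cvg_shiftS /=.
have : (fun n => (k%:R : R) * harmonic n) @ \oo --> (k%:R * 0 : R).
  by apply: cvgMl_tmp; apply: cvg_harmonic.
by rewrite mulr0.
Qed.

End Analysis.

Section AnnealedExpectation.
Variables (R : numFieldType) (p : R) (P : forall n : nat, fin_graph n -> R).
Arguments P : clear implicits.
Hypothesis p01 : 0 <= p <= 1.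
Hypothesis P_ge0 : forall n (G : fin_graph n), 0 <= P n G.
Hypothesis P_sum1 : forall n, \sum_(G : fin_graph n) P n G = 1.

Lemma ler_Eperc n (F F' : fin_graph n -> fin_graph n -> R) :
  (forall G w, F G w <= F' G w) -> Eperc P p F <= Eperc P p F'.
Proof.
move=> FF'; apply: ler_sum => G _; apply: ler_sum => w _.
by rewrite ler_wpM2l ?mulr_ge0 ?perc_weight_ge0.
Qed.

Lemma Eperc_ge0 n (F : fin_graph n -> fin_graph n -> R) :
  (forall G w, 0 <= F G w) -> 0 <= Eperc P p F.
Proof.
move=> F0; apply: sumr_ge0 => G _; apply: sumr_ge0 => w _.
by rewrite !mulr_ge0 ?perc_weight_ge0.
Qed.

Lemma Prob1_ge0 n (E : fin_graph n -> fin_graph n -> 'I_n -> bool) : 0 <= Prob1 P p E.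
Proof. by apply: Eperc_ge0 => G w; rewrite divr_ge0 ?sumr_ge0. Qed.

Lemma Prob2_ge0 n (E : fin_graph n -> fin_graph n -> 'I_n -> 'I_n -> bool) :
  0 <= Prob2 P p E.
Proof.
apply: Eperc_ge0 => G w; rewrite divr_ge0 ?exprn_ge0 //.
by apply: sumr_ge0 => u _; apply: sumr_ge0.
Qed.

Lemma EpercBD_cst n (F1 F2 : fin_graph n -> fin_graph n -> R) c :
  Eperc P p (fun G w => F1 G w - F2 G w + c) = Eperc P p F1 - Eperc P p F2 + c.
Proof.
have Ec : \sum_G \sum_w P n G * perc_weight p G w * c = c.
  rewrite -[RHS]mul1r -(P_sum1 n) big_distrl /=; apply: eq_bigr => G _.
  by rewrite -big_distrl /= -big_distrr /= sum_perc_weight mulr1.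
rewrite /Eperc -[in RHS]Ec -!sumrB -big_split /=; apply: eq_bigr => G _.
by rewrite -!sumrB -big_split /=; apply: eq_bigr => w _; ring.
Qed.

Lemma EpercZ n (F : fin_graph n -> fin_graph n -> R) c :
  Eperc P p (fun G w => c * F G w) = c * Eperc P p F.
Proof.
rewrite /Eperc big_distrr; apply: eq_bigr => G _; rewrite big_distrr.
by apply: eq_bigr => w _; rewrite /= mulrCA.
Qed.

End AnnealedExpectation.

Section Limits.
Local Open Scope classical_set_scope.
Variables (R : realType) (p : R) (P : forall n : nat, fin_graph n -> R).
Arguments P : clear implicits.
Variables (d : measure_display) (Omega : measurableType d) (Pmu : probability Omega R).
Variable X : Omega -> rooted_graph.
Hypothesis p01 : 0 <= p <= 1.
Hypothesis P_ge0 : forall n (G : fin_graph n), 0 <= P n G.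
Hypothesis P_sum1 : forall n, \sum_(G : fin_graph n) P n G = 1.
Hypothesis P_sym :
  forall n (G : fin_graph n), P n G != 0 -> forall x y, (x, y) \in G -> (y, x) \in G.
Hypothesis X_sym : forall o, symmetric (X o).
Hypothesis X_meas : forall f : rooted_graph -> R, local_fun f -> measurable_fun setT (f \o X).
Hypothesis lwc : lwc_in_prob P Pmu X.
Hypothesis giant : converging_giant P p Pmu X.

Definition zeta_ge (k : nat) : R := Rintegral Pmu setT (root_prob_ge p k \o X).

Lemma zeta_ge_cvg : zeta_ge @ \oo --> zeta p Pmu X.
Proof.
apply: (Rintegral_cvg_bounded (g := fun k => root_prob_ge p k \o X)) => [k|o|k o].
- exact/X_meas/local_root_prob_ge.
- exact/root_prob_ge_cvg/X_sym.
- by rewrite /= ger0_norm ?root_prob_ge_ge0 ?root_prob_ge_le1.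
Qed.

Lemma Prob1_cluster_geE k n :
  Prob1 P p (fun (G w : fin_graph n) v => (k <= #|perc_cluster w v|)%N) =
  \sum_G P n G * ((\sum_v root_prob_ge p k (rooted_at G v)) / n%:R).
Proof.
apply: eq_bigr => G _; have [->|PG0] := eqVneq (P n G) 0.
  by rewrite mul0r big1 // => w _; rewrite !mul0r.
under eq_bigr do rewrite -mulrA.
rewrite -big_distrr /=; congr (_ * _).
under eq_bigr do rewrite mulrA.
rewrite -big_distrl /=; congr (_ / _).
under eq_bigr do rewrite big_distrr /=.
rewrite exchange_big /=; apply: eq_bigr => v _.
by rewrite root_prob_ge_rooted_at //; apply: P_sym.
Qed.

Lemma Prob1_cluster_ge_cvg k :
  (fun n => Prob1 P p (fun (G w : fin_graph n) v => (k <= #|perc_cluster w v|)%N))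
    @ \oo --> zeta_ge k.
Proof.
rewrite (eq_cvg _ _ (Prob1_cluster_geE k)).
apply: cvg_expectation_bounded => [n G|n|n G|eps eps0].
- exact: P_ge0.
- exact: P_sum1.
- by apply: mean_in01 => v; rewrite root_prob_ge_ge0 ?root_prob_ge_le1.
- apply: (lwc (local_root_prob_ge p01 k)) => //.
  by exists 1 => a; rewrite ger0_norm ?root_prob_ge_ge0 ?root_prob_ge_le1.
Qed.

Lemma Eperc_cvg (F : forall n, fin_graph n -> fin_graph n -> R) c :
  (forall n G w, 0 <= F n G w <= 1) ->
  (forall eps, 0 < eps ->
     (fun n => ProbPerc P p (fun G w : fin_graph n => `|F n G w - c| > eps)) @ \oo --> 0) ->
  (fun n => Eperc P p (F n)) @ \oo --> c.
Proof.
move=> F01 F_cvg.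
have E n (H : fin_graph n -> fin_graph n -> R) : Eperc P p H =
    \sum_(q : fin_graph n * fin_graph n) P n q.1 * perc_weight p q.1 q.2 * H q.1 q.2.
  by rewrite /Eperc pair_bigA.
rewrite (eq_cvg _ _ (fun n => E n (F n))).
apply: cvg_expectation_bounded => [n q|n|n q|eps /F_cvg].
- by rewrite mulr_ge0 ?perc_weight_ge0.
- rewrite -(pair_bigA _ (fun G w => P n G * perc_weight p G w)) /= -(P_sum1 n).
  by apply: eq_bigr => G _; rewrite -big_distrr /= sum_perc_weight mulr1.
- exact: F01.
- by rewrite (eq_cvg _ _ (fun n => E n _)).
Qed.

Lemma Prob1_giant_cvg :
  (fun n => Prob1 P p (fun (G w : fin_graph n) v => in_giant w v)) @ \oo --> zeta p Pmu X.
Proof.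
have E n : Prob1 P p (fun (G w : fin_graph n) v => in_giant w v) =
    Eperc P p (fun G w : fin_graph n => (giant_size w)%:R / n%:R).
  rewrite /Prob1 /Eperc; apply: eq_bigr => G _; apply: eq_bigr => w _; congr (_ * (_ / _)).
  by rewrite /giant_size -sum_mem_card natr_sum; apply: eq_bigr => v _; rewrite inE.
rewrite (eq_cvg _ _ E); apply: Eperc_cvg => // n G w.
by rewrite natr_ratio_in01 // /giant_size (leq_trans (max_card _)) // card_ord.
Qed.

Definition outside_giant_ub (k n : nat) : R :=
  Prob1 P p (fun (G w : fin_graph n) v => (k <= #|perc_cluster w v|)%N)
  - Prob1 P p (fun (G w : fin_graph n) v => in_giant w v) + k%:R / n%:R.

Lemma Prob1_outside_giant_le k n :
  Prob1 P p (fun (G w : fin_graph n) v => ~~ in_giant w v && (k <= #|perc_cluster w v|)%N)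
  <= outside_giant_ub k n.
Proof.
rewrite /outside_giant_ub /Prob1 -EpercBD_cst //; apply: ler_Eperc => // G w.
rewrite -!natr_sum -mulrBl -mulrDl ler_wpM2r ?invr_ge0 //.
by have := count_outside_giant_le w k; rewrite -(ler_nat R) !natrD; lra.
Qed.

Lemma Prob2_distinct_clusters_le k n :
  Prob2 P p (fun (G w : fin_graph n) u v =>
      [&& (k <= #|perc_cluster w u|)%N, (k <= #|perc_cluster w v|)%N
        & perc_cluster w u != perc_cluster w v]) <=
  2 * Prob1 P p (fun (G w : fin_graph n) v => ~~ in_giant w v && (k <= #|perc_cluster w v|)%N).
Proof.
rewrite /Prob2 /Prob1 -EpercZ; apply: ler_Eperc => // G w.
have h := count_distinct_clusters_le w k.
under eq_bigr do rewrite -natr_sum.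
rewrite -!natr_sum; move: G w h; case: n => [|n] G w h.
  by rewrite !big_ord0 !mul0r mulr0.
rewrite ler_pdivrMr ?exprn_gt0 ?ltr0Sn //.
set L := (\sum_u _)%N in h *; set S := (\sum_u _)%N in h *.
have -> : 2 * (S%:R / n.+1%:R) * n.+1%:R ^+ 2 = (2 * n.+1 * S)%:R :> R.
  by rewrite !natrM; field; rewrite addrC natr1 pnatr_eq0.
by rewrite ler_nat.
Qed.

Lemma zeta_ge_sub_cvg0 : (fun k => zeta_ge k - zeta p Pmu X) @ \oo --> 0.
Proof.
by rewrite -(subrr (zeta p Pmu X)); apply: cvgB; [exact: zeta_ge_cvg|exact: cvg_cst].
Qed.

Lemma outside_giant_ub_cvg k : outside_giant_ub k @ \oo --> zeta_ge k - zeta p Pmu X.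
Proof.
rewrite -[_ - _]addr0; apply: cvgD; last exact: natr_div_cvg0.
by apply: cvgB; [exact: Prob1_cluster_ge_cvg|exact: Prob1_giant_cvg].
Qed.

End Limits.

Local Open Scope classical_set_scope.

Theorem proposition2p3 (R : realType) (p : R) (P : forall n : nat, fin_graph n -> R)
  (d : measure_display) (Omega : measurableType d) (Pmu : probability Omega R)
  (X : Omega -> rooted_graph) :
  0 <= p <= 1 ->
  (forall n (G : fin_graph n), 0 <= P n G) ->
  (forall n, \sum_(G : fin_graph n) P n G = 1) ->
  (forall n (G : fin_graph n), P n G != 0 -> simple_graph G) ->
  (forall o, valid_rgraph (X o)) ->
  (forall f : rooted_graph -> R, local_fun f -> measurable_fun setT (f \o X)) ->
  lwc_in_prob P Pmu X ->
  converging_giant P p Pmu X ->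
  [/\ 0 < zeta p Pmu X ->
        (fun k => limn_sup (fun n => Prob1 P p (fun (G w : fin_graph n) v =>
            ~~ in_giant w v && (k <= #|perc_cluster w v|)%N))) @ \oo --> 0,
      zeta p Pmu X = 0 ->
        (fun k => limn_sup (fun n => Prob1 P p (fun (G w : fin_graph n) v =>
            (k <= #|perc_cluster w v|)%N))) @ \oo --> 0
    & (fun k => limn_sup (fun n => Prob2 P p (fun (G w : fin_graph n) u v =>
            [&& (k <= #|perc_cluster w u|)%N, (k <= #|perc_cluster w v|)%N
              & perc_cluster w u != perc_cluster w v]))) @ \oo --> 0].
Proof.
move=> p01 P_ge0 P_sum1 P_simple X_valid X_meas lwc giant.
have P_sym n (G : fin_graph n) : P n G != 0 -> forall x y, (x, y) \in G -> (y, x) \in G.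
  by move=> /P_simple /simple_graph_sym.
have X_sym o : symmetric (X o) by case: (X_valid o).
have ub_cvg k := outside_giant_ub_cvg p01 P_ge0 P_sum1 P_sym lwc giant (k := k).
have zeta_ge_zeta := zeta_ge_sub_cvg0 Pmu p01 X_sym X_meas.
have outside_le := Prob1_outside_giant_le p01 P_ge0 P_sum1.
split.
- move=> _; apply: (limn_sup_cvg0 _ ub_cvg zeta_ge_zeta) => k n.
  by rewrite Prob1_ge0 ?outside_le.
- move=> zeta0; apply: (limn_sup_cvg0 (a := fun k n =>
    Prob1 P p (fun (G w : fin_graph n) v => (k <= #|perc_cluster w v|)%N))) => [k n|k|].
  + by rewrite Prob1_ge0 ?lexx.
  + exact: (Prob1_cluster_ge_cvg p01 P_ge0 P_sum1 P_sym lwc).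
  + by rewrite -zeta0; apply: (zeta_ge_cvg p01 X_sym X_meas).
- apply: (limn_sup_cvg0 (a := fun k n => 2 * outside_giant_ub p P k n)) => [k n|k|].
  + rewrite Prob2_ge0 //= (le_trans (Prob2_distinct_clusters_le p01 P_ge0 k n)) //.
    by rewrite ler_wpM2l ?outside_le.
  + by apply: cvgMl_tmp; apply: ub_cvg.
  + by rewrite -(mulr0 2); apply: cvgMl_tmp.
Qed.
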